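(* Assume $M$ is projective in $\sigma[M]$ and let $X\in\sigma[M]$. Then for every submodule $Y$ of $X$, either $\sqrt[M]{Y}=X$ or $\sqrt[M]{Y}$ is an $M$-semiprime submodule of $X$.
   Context: $R$ is a ring with identity, modules are unital left $R$-modules, $M$ is a fixed left $R$-module; $\sigma[M]$ is the full subcategory of $R$-modules isomorphic to submodules of $M$-generated modules. For $N\le M$ and a module $X$, $N\cdot X$ is the intersection of the kernels of all homomorphisms $X\to W$ where $W$ ranges over modules with $f(N)=0$ for all $f\in\mathrm{Hom}_R(M,W)$ (for $Z\le X$, $N\cdot Z$ is formed regarding $Z$ as a module); $N^2:=N\cdot N$. A proper submodule $P$ of $X$ is $M$-prime if for all $N\le M$, $Z\le X$, $N\cdot Z\subseteq P$ implies $N\cdot X\subseteq P$ or $Z\subseteq P$; it is $M$-semiprime if $N^2\cdot Z\subseteq P$ implies $N\cdot Z\subseteq P$ for all $N\le M$, $Z\le X$. A nonempty $S\subseteq X\setminus\{0\}$ is an $M$-$m$-system if for every $N\le M$ and all $Y,Z\le X$: $(Y+Z)\cap S\neq\emptyset$ and $(Y+N\cdot X)\cap S\neq\emptyset$ imply $(Y+N\cdot Z)\cap S\neq\emptyset$. For $Y\le X$: if some $M$-prime submodule of $X$ contains $Y$, $\sqrt[M]{Y}:=\{x\in X:$ every $M$-$m$-system containing $x$ meets $Y\}$; otherwise $\sqrt[M]{Y}:=X$. *)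

(* Left R-modules are [lmodType R] over [R : pzRingType]
   (a ring with identity).  Submodules are represented as predicates
   [V -> Prop] closed under the module operations. *)
From HB Require Import structures.
From mathcomp Require Import all_boot all_algebra.
Set Implicit Arguments. Unset Strict Implicit. Unset Printing Implicit Defensive.
Import GRing.Theory.
Local Open Scope ring_scope.

Section ModDefs.
Variable R : pzRingType.

Definition submod (V : lmodType R) (N : V -> Prop) : Prop :=
  N 0 /\ forall (a : R) (x y : V), N x -> N y -> N (a *: x + y).

Definition subp (V : lmodType R) (A B : V -> Prop) : Prop :=
  forall x, A x -> B x.

Definition fullp (V : lmodType R) : V -> Prop := fun _ => True.

Definition is_hom (V W : lmodType R) (f : V -> W) : Prop :=
  forall (a : R) (x y : V), f (a *: x + y) = a *: f x + f y.

(* a homomorphism Z -> W, for a submodule Z of V, represented by any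
   function V -> W whose restriction to Z is R-linear *)
Definition hom_on (V W : lmodType R) (Z : V -> Prop) (g : V -> W) : Prop :=
  forall (a : R) (x y : V), Z x -> Z y -> g (a *: x + y) = a *: g x + g y.

Definition annih (M : lmodType R) (N : M -> Prop) (W : lmodType R) : Prop :=
  forall f : M -> W, is_hom f -> forall m, N m -> f m = 0.

(* N . Z : intersection of the kernels of all homomorphisms Z -> W with
   W annihilated by N (Z regarded as a module) *)
Definition dotp (M X : lmodType R) (N : M -> Prop) (Z : X -> Prop) : X -> Prop :=
  fun x => Z x /\
    forall (W : lmodType R) (g : X -> W), hom_on Z g -> annih N W -> g x = 0.

Definition sqp (M : lmodType R) (N : M -> Prop) : M -> Prop := dotp N N.

(* Y is M-generated: Y is generated by the images of all f in Hom(M, Y)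
   (i.e. Y = Tr(M, Y), equivalently Y is an epimorphic image of M^(Lambda)) *)
Definition Mgenerated (M Y : lmodType R) : Prop :=
  forall T : Y -> Prop, submod T ->
    (forall f : M -> Y, is_hom f -> forall m, T (f m)) -> forall y, T y.

Definition in_sigma (M X : lmodType R) : Prop :=
  exists (Y : lmodType R) (f : X -> Y),
    [/\ is_hom f, injective f & Mgenerated M Y].

Definition projective_in_sigma (M : lmodType R) : Prop :=
  forall A B : lmodType R, in_sigma M A -> in_sigma M B ->
  forall g : A -> B, is_hom g -> (forall b, exists a, g a = b) ->
  forall h : M -> B, is_hom h ->
  exists f : M -> A, is_hom f /\ forall m, g (f m) = h m.

Definition sump (X : lmodType R) (A B : X -> Prop) : X -> Prop :=
  fun x => exists y z, [/\ A y, B z & x = y + z].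

Definition meets (X : lmodType R) (A B : X -> Prop) : Prop :=
  exists x, A x /\ B x.

Definition proper (X : lmodType R) (P : X -> Prop) : Prop :=
  exists x, ~ P x.

Definition Mprime (M X : lmodType R) (P : X -> Prop) : Prop :=
  [/\ submod P, proper P &
    forall (N : M -> Prop) (Z : X -> Prop), submod N -> submod Z ->
      subp (dotp N Z) P -> subp (dotp N (@fullp X)) P \/ subp Z P].

Definition Msemiprime (M X : lmodType R) (P : X -> Prop) : Prop :=
  [/\ submod P, proper P &
    forall (N : M -> Prop) (Z : X -> Prop), submod N -> submod Z ->
      subp (dotp (sqp N) Z) P -> subp (dotp N Z) P].

Definition m_system (M X : lmodType R) (S : X -> Prop) : Prop :=
  [/\ exists x, S x,
      forall x, S x -> x <> 0 &
      forall (N : M -> Prop) (Y Z : X -> Prop), submod N -> submod Y -> submod Z ->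
        meets (sump Y Z) S -> meets (sump Y (dotp N (@fullp X))) S ->
        meets (sump Y (dotp N Z)) S].

Definition Mrad (M X : lmodType R) (Y : X -> Prop) : X -> Prop :=
  fun x =>
    (~ exists P : X -> Prop, Mprime M P /\ subp Y P) \/
    (forall S : X -> Prop, m_system M S -> S x -> meets S Y).

End ModDefs.

From HB Require Import structures.
From mathcomp Require Import all_boot all_algebra.
From mathcomp Require Import boolp classical_sets functions.
Set Implicit Arguments. Unset Strict Implicit. Unset Printing Implicit Defensive.
Import GRing.Theory.
Local Open Scope ring_scope.

(* If no M-prime submodule contains Y the radical is X by definition.
   Otherwise it is the intersection of the M-primes containing Y
   ([Mrad_cap_primes]): complements of M-primes are M-m-systems, and by Zorn's
   lemma a submodule maximal among those containing Y and avoiding an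
   m-system is M-prime.  An intersection of M-primes is M-semiprime as soon as
   every M-prime satisfies the semiprime condition ([prime_semiprime]); by
   primality this reduces to the inclusion N . (N . X) <= N^2 . X
   ([dotp_dotp_sub_sqp]).  Projectivity enters there twice: N . V lies in the
   trace of N in V for every V in sigma[M] ([dotp_full_sub_tr], using the
   quotient of V by that trace), and a homomorphism M -> X with values in the
   trace of N lifts along the summation map from the direct sum of copies of
   N indexed by Hom(M, X), so it sends N into N^2 . X ([tr_hom_annih]). *)

Section SubmoduleArith.
Variables (R : pzRingType) (V : lmodType R) (P : V -> Prop).
Hypothesis HP : submod P.

Lemma sm0 : P 0.
Proof. by case: HP. Qed.

Lemma smL a x y : P x -> P y -> P (a *: x + y).
Proof. by case: HP => _; apply. Qed.

Lemma smD x y : P x -> P y -> P (x + y).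
Proof. by move=> Px Py; have := smL 1 Px Py; rewrite scale1r. Qed.

Lemma smZ a x : P x -> P (a *: x).
Proof. by move=> Px; have := smL a Px sm0; rewrite addr0. Qed.

Lemma smN x : P x -> P (- x).
Proof. by move=> Px; rewrite -scaleN1r; apply: smZ. Qed.

Lemma smB x y : P x -> P y -> P (x - y).
Proof. by move=> Px Py; apply: smD => //; apply: smN. Qed.

Lemma sm_sum (I : Type) (s : seq I) (F : I -> V) :
  (forall i, P (F i)) -> P (\sum_(i <- s) F i).
Proof.
move=> PF; elim: s => [|i s IH]; first by rewrite big_nil; apply: sm0.
by rewrite big_cons; apply: smD.
Qed.

End SubmoduleArith.

Section HomArith.
Variables (R : pzRingType) (V W : lmodType R) (f : V -> W).
Hypothesis hf : is_hom f.

Lemma hom0 : f 0 = 0.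
Proof.
have := hf 1 0 0; rewrite !scale1r addr0 => E.
by apply: (addrI (f 0)); rewrite addr0 -E.
Qed.

Lemma homD x y : f (x + y) = f x + f y.
Proof. by have := hf 1 x y; rewrite !scale1r. Qed.

Lemma homZ a x : f (a *: x) = a *: f x.
Proof. by have := hf a x 0; rewrite hom0 !addr0. Qed.

Lemma homB x y : f (x - y) = f x - f y.
Proof. by rewrite homD -scaleN1r homZ scaleN1r. Qed.

Lemma hom_sum (I : Type) (s : seq I) (F : I -> V) :
  f (\sum_(i <- s) F i) = \sum_(i <- s) f (F i).
Proof.
elim: s => [|i s IH]; first by rewrite !big_nil hom0.
by rewrite !big_cons homD IH.
Qed.

End HomArith.

Lemma hom_comp (R : pzRingType) (U V W : lmodType R) (f : U -> V) (g : V -> W) :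
  is_hom f -> is_hom g -> is_hom (fun x => g (f x)).
Proof. by move=> hf hg a x y; rewrite hf hg. Qed.

Lemma hom_full (R : pzRingType) (V W : lmodType R) (f : V -> W) :
  is_hom f <-> hom_on (@fullp R V) f.
Proof. by split=> h a x y; [move=> _ _|]; apply: h. Qed.

Lemma fullp_submod (R : pzRingType) (V : lmodType R) : submod (@fullp R V).
Proof. by []. Qed.

Lemma ker_submod (R : pzRingType) (V W : lmodType R) (f : V -> W) :
  is_hom f -> submod (fun x => f x = 0).
Proof.
move=> hf; split; first exact: hom0.
by move=> a x y fx fy; rewrite hf fx fy scaler0 addr0.
Qed.

Definition submodT (R : pzRingType) (V : lmodType R) (P : V -> Prop) (HP : submod P) :=
  {v : V | P v}.
HB.instance Definition _ R V P HP := gen_eqMixin (@submodT R V P HP).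
HB.instance Definition _ R V P HP := gen_choiceMixin (@submodT R V P HP).

Definition incl (R : pzRingType) (V : lmodType R) (P : V -> Prop) (HP : submod P)
  (u : submodT HP) : V := proj1_sig u.

Lemma incl_inj (R : pzRingType) (V : lmodType R) (P : V -> Prop) (HP : submod P) :
  injective (@incl R V P HP).
Proof. by move=> [x px] [y py] /= E; subst y; rewrite (Prop_irrelevance px py). Qed.

Lemma inclP (R : pzRingType) (V : lmodType R) (P : V -> Prop) (HP : submod P)
  (u : submodT HP) : P (incl u).
Proof. exact: proj2_sig u. Qed.

Definition sub_zero R V P (HP : submod P) : @submodT R V P HP := exist _ 0 (sm0 HP).
Definition sub_add R V P (HP : submod P) (u w : @submodT R V P HP) : submodT HP :=
  exist _ (incl u + incl w) (smD HP (inclP u) (inclP w)).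
Definition sub_opp R V P (HP : submod P) (u : @submodT R V P HP) : submodT HP :=
  exist _ (- incl u) (smN HP (inclP u)).
Definition sub_scale R V P (HP : submod P) a (u : @submodT R V P HP) : submodT HP :=
  exist _ (a *: incl u) (smZ HP a (inclP u)).

Lemma sub_addA R V P HP : associative (@sub_add R V P HP).
Proof. by move=> x y z; apply: incl_inj; rewrite /= addrA. Qed.
Lemma sub_addC R V P HP : commutative (@sub_add R V P HP).
Proof. by move=> x y; apply: incl_inj; rewrite /= addrC. Qed.
Lemma sub_add0 R V P HP : left_id (@sub_zero R V P HP) (@sub_add R V P HP).
Proof. by move=> x; apply: incl_inj; rewrite /= add0r. Qed.
Lemma sub_addN R V P HP :
  left_inverse (@sub_zero R V P HP) (@sub_opp R V P HP) (@sub_add R V P HP).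
Proof. by move=> x; apply: incl_inj; rewrite /= addNr. Qed.

HB.instance Definition _ R V P HP :=
  GRing.isZmodule.Build (@submodT R V P HP) (@sub_addA R V P HP) (@sub_addC R V P HP)
    (@sub_add0 R V P HP) (@sub_addN R V P HP).

Lemma sub_scaleA R V P HP a b (v : @submodT R V P HP) :
  sub_scale a (sub_scale b v) = sub_scale (a * b) v.
Proof. by apply: incl_inj; rewrite /= scalerA. Qed.
Lemma sub_scale1 R V P HP : left_id 1 (@sub_scale R V P HP).
Proof. by move=> x; apply: incl_inj; rewrite /= scale1r. Qed.
Lemma sub_scaleDr R V P HP : right_distributive (@sub_scale R V P HP) +%R.
Proof. by move=> a x y; apply: incl_inj; rewrite /= scalerDr. Qed.
Lemma sub_scaleDl R V P HP (v : @submodT R V P HP) :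
  {morph (@sub_scale R V P HP)^~ v : a b / a + b}.
Proof. by move=> a b; apply: incl_inj; rewrite /= scalerDl. Qed.

HB.instance Definition _ R V P HP :=
  GRing.Zmodule_isLmodule.Build R (@submodT R V P HP) (@sub_scaleA R V P HP)
    (@sub_scale1 R V P HP) (@sub_scaleDr R V P HP) (@sub_scaleDl R V P HP).

Lemma incl_hom (R : pzRingType) (V : lmodType R) (P : V -> Prop) (HP : submod P) :
  is_hom (@incl R V P HP).
Proof. by []. Qed.

Definition coset (R : pzRingType) (V : lmodType R) (T : V -> Prop) (v : V) : V -> Prop :=
  fun w => T (w - v).

Definition quotT (R : pzRingType) (V : lmodType R) (T : V -> Prop) (HT : submod T) :=
  {A : V -> Prop | exists v, A = coset T v}.
HB.instance Definition _ R V T HT := gen_eqMixin (@quotT R V T HT).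
HB.instance Definition _ R V T HT := gen_choiceMixin (@quotT R V T HT).

Definition qproj (R : pzRingType) (V : lmodType R) (T : V -> Prop) (HT : submod T)
  (v : V) : quotT HT := exist _ (coset T v) (ex_intro _ v erefl).

Lemma qproj_eq (R : pzRingType) (V : lmodType R) (T : V -> Prop) (HT : submod T) v w :
  qproj HT v = qproj HT w <-> T (v - w).
Proof.
split=> [E|Tvw].
  have : coset T v v = coset T w v by rewrite -[coset T v]/(proj1_sig (qproj HT v)) E.
  by rewrite /coset subrr => <-; apply: sm0.
have E : coset T v = coset T w.
  apply: funext => u; apply: propext; rewrite /coset; split => H.
  - by have := smD HT H Tvw; rewrite addrA subrK.
  - by have := smB HT H Tvw; rewrite opprB addrA subrK.
by rewrite /qproj; move: (ex_intro _ v _); rewrite E => p; congr exist.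
Qed.

Lemma qproj_surj (R : pzRingType) (V : lmodType R) (T : V -> Prop) (HT : submod T)
  (q : quotT HT) : exists v, q = qproj HT v.
Proof.
case: q => A [v EA]; exists v; subst A; rewrite /qproj.
by congr exist; apply: Prop_irrelevance.
Qed.

Definition qrep (R : pzRingType) (V : lmodType R) (T : V -> Prop) (HT : submod T)
  (q : quotT HT) : V := proj1_sig (cid (qproj_surj q)).

Lemma qrepK (R : pzRingType) (V : lmodType R) (T : V -> Prop) (HT : submod T)
  (q : quotT HT) : qproj HT (qrep q) = q.
Proof. by rewrite /qrep; case: (cid _). Qed.

Lemma qrepP (R : pzRingType) (V : lmodType R) (T : V -> Prop) (HT : submod T) v :
  T (qrep (qproj HT v) - v).
Proof. by apply/qproj_eq; rewrite qrepK. Qed.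

Definition q_zero R V T (HT : submod T) : @quotT R V T HT := qproj HT 0.
Definition q_add R V T (HT : submod T) (q r : @quotT R V T HT) : quotT HT :=
  qproj HT (qrep q + qrep r).
Definition q_opp R V T (HT : submod T) (q : @quotT R V T HT) : quotT HT :=
  qproj HT (- qrep q).
Definition q_scale R V T (HT : submod T) a (q : @quotT R V T HT) : quotT HT :=
  qproj HT (a *: qrep q).

Lemma q_addE R V T HT v w : @q_add R V T HT (qproj HT v) (qproj HT w) = qproj HT (v + w).
Proof. by apply/qproj_eq; have := smD HT (qrepP HT v) (qrepP HT w); rewrite opprD addrACA. Qed.
Lemma q_oppE R V T HT v : @q_opp R V T HT (qproj HT v) = qproj HT (- v).
Proof. by apply/qproj_eq; have := smN HT (qrepP HT v); rewrite opprB opprK addrC. Qed.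
Lemma q_scaleE R V T HT a v : @q_scale R V T HT a (qproj HT v) = qproj HT (a *: v).
Proof. by apply/qproj_eq; have := smZ HT a (qrepP HT v); rewrite scalerBr. Qed.

Lemma q_addA R V T HT : associative (@q_add R V T HT).
Proof.
move=> x y z; have [a ->] := qproj_surj x; have [b ->] := qproj_surj y.
by have [c ->] := qproj_surj z; rewrite !q_addE addrA.
Qed.
Lemma q_addC R V T HT : commutative (@q_add R V T HT).
Proof.
move=> x y; have [a ->] := qproj_surj x; have [b ->] := qproj_surj y.
by rewrite !q_addE addrC.
Qed.
Lemma q_add0 R V T HT : left_id (@q_zero R V T HT) (@q_add R V T HT).
Proof. by move=> x; have [a ->] := qproj_surj x; rewrite /q_zero q_addE add0r. Qed.
Lemma q_addN R V T HT :
  left_inverse (@q_zero R V T HT) (@q_opp R V T HT) (@q_add R V T HT).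
Proof. by move=> x; have [a ->] := qproj_surj x; rewrite q_oppE q_addE addNr. Qed.

HB.instance Definition _ R V T HT :=
  GRing.isZmodule.Build (@quotT R V T HT) (@q_addA R V T HT) (@q_addC R V T HT)
    (@q_add0 R V T HT) (@q_addN R V T HT).

Lemma q_scaleA R V T HT a b (v : @quotT R V T HT) :
  q_scale a (q_scale b v) = q_scale (a * b) v.
Proof. by have [x ->] := qproj_surj v; rewrite !q_scaleE scalerA. Qed.
Lemma q_scale1 R V T HT : left_id 1 (@q_scale R V T HT).
Proof. by move=> v; have [x ->] := qproj_surj v; rewrite !q_scaleE scale1r. Qed.
Lemma q_scaleDr R V T HT : right_distributive (@q_scale R V T HT) +%R.
Proof.
move=> a v w; have [x ->] := qproj_surj v; have [y ->] := qproj_surj w.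
by rewrite /GRing.add /= q_addE !q_scaleE q_addE scalerDr.
Qed.
Lemma q_scaleDl R V T HT (v : @quotT R V T HT) :
  {morph (@q_scale R V T HT)^~ v : a b / a + b}.
Proof.
move=> a b; have [x ->] := qproj_surj v.
by rewrite /GRing.add /= !q_scaleE q_addE scalerDl.
Qed.

HB.instance Definition _ R V T HT :=
  GRing.Zmodule_isLmodule.Build R (@quotT R V T HT) (@q_scaleA R V T HT)
    (@q_scale1 R V T HT) (@q_scaleDr R V T HT) (@q_scaleDl R V T HT).

Lemma qproj_hom (R : pzRingType) (V : lmodType R) (T : V -> Prop) (HT : submod T) :
  is_hom (qproj HT).
Proof.
move=> a x y; rewrite -[_ + qproj HT y]/(q_add _ _) -[_ *: qproj HT x]/(q_scale _ _).
by rewrite q_scaleE q_addE.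
Qed.

Lemma qproj0 (R : pzRingType) (V : lmodType R) (T : V -> Prop) (HT : submod T) v :
  qproj HT v = 0 <-> T v.
Proof. by rewrite -(hom0 (qproj_hom HT)) qproj_eq subr0. Qed.

Definition imgp (R : pzRingType) (V W : lmodType R) (f : V -> W) (T : V -> Prop) : W -> Prop :=
  fun y => exists v, T v /\ y = f v.

Lemma imgp_submod (R : pzRingType) (V W : lmodType R) (f : V -> W) (T : V -> Prop) :
  is_hom f -> submod T -> submod (imgp f T).
Proof.
move=> hf HT; split; first by exists 0; split; [apply: sm0|rewrite hom0].
move=> a _ _ [x [Tx ->]] [y [Ty ->]]; exists (a *: x + y); split; last by rewrite hf.
exact: smL.
Qed.

Section SigmaClosure.
Variables (R : pzRingType) (M V : lmodType R).
Hypothesis HV : in_sigma M V.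

(* sigma[M] is closed under submodules ... *)
Lemma in_sigma_sub (P : V -> Prop) (HP : submod P) : in_sigma M (submodT HP).
Proof.
case: HV => Y [f [hf injf gY]]; exists Y, (fun u => f (incl u)); split => //.
- exact: hom_comp.
- by move=> u w /injf /incl_inj.
Qed.

(* ... and under quotients: if [f : V -> Y] embeds [V] into an M-generated
   [Y], then [V / T] embeds into the M-generated module [Y / f(T)]. *)
Lemma in_sigma_quot (T : V -> Prop) (HT : submod T) : in_sigma M (quotT HT).
Proof.
case: HV => Y [f [hf injf gY]].
pose HfT := imgp_submod hf HT.
pose F (q : quotT HT) := qproj HfT (f (qrep q)).
have FE v : F (qproj HT v) = qproj HfT (f v).
  rewrite /F; apply/qproj_eq; rewrite -homB //; exists (qrep (qproj HT v) - v).
  by split => //; apply: qrepP.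
exists (quotT HfT), F; split.
- move=> a x y; have [u ->] := qproj_surj x; have [w ->] := qproj_surj y.
  by rewrite -(qproj_hom HT) !FE hf (qproj_hom HfT).
- move=> x y; have [u ->] := qproj_surj x; have [w ->] := qproj_surj y.
  rewrite !FE => /qproj_eq [z [Tz E]]; apply/qproj_eq.
  by move: E; rewrite -homB // => /injf ->.
- move=> Tq HTq HTf q; have [y ->] := qproj_surj q.
  pose Tp y := Tq (qproj HfT y).
  have HTp : submod Tp.
    split; first by rewrite /Tp (hom0 (qproj_hom HfT)); apply: sm0.
    by move=> a x z; rewrite /Tp (qproj_hom HfT); apply: smL.
  suff all_Tp : forall y, Tp y by exact: all_Tp y.
  apply: (gY Tp HTp) => g hg m.
  exact: (HTf _ (hom_comp hg (qproj_hom HfT)) m).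
Qed.

End SigmaClosure.

Section Product.
Variables (R : pzRingType) (M X : lmodType R) (N : M -> Prop).

Lemma dotp_sub (Z : X -> Prop) x : dotp N Z x -> Z x.
Proof. by case. Qed.

Lemma dotp_submod (Z : X -> Prop) : submod Z -> submod (dotp N Z).
Proof.
move=> HZ; split.
- split; first exact: sm0.
  move=> W g hg _; have := hg 1 0 0 (sm0 HZ) (sm0 HZ); rewrite !scale1r addr0 => E.
  by apply: (addrI (g 0)); rewrite addr0 -E.
- move=> a x y [Zx Hx] [Zy Hy]; split; first exact: smL.
  by move=> W g hg aN; rewrite hg // (Hx W g hg aN) (Hy W g hg aN) scaler0 addr0.
Qed.

Lemma dotp_mono (Z Z' : X -> Prop) : subp Z Z' -> subp (dotp N Z) (dotp N Z').
Proof.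
move=> ZZ' x [Zx Hx]; split; first exact: ZZ'.
by move=> W g hg aN; apply: Hx => // a u v Zu Zv; apply: hg; apply: ZZ'.
Qed.

Definition extend (W : lmodType R) (P : X -> Prop) (HP : submod P)
  (G : submodT HP -> W) : X -> W :=
  fun y => if pselect (P y) is left h then G (exist _ y h) else 0.

Lemma extendE (W : lmodType R) (P : X -> Prop) (HP : submod P)
  (G : submodT HP -> W) (u : submodT HP) : extend G (incl u) = G u.
Proof.
rewrite /extend; case: pselect => [h|]; last by case: u => y /= h; move/(_ h).
by congr G; apply: incl_inj.
Qed.

Lemma extend_hom (W : lmodType R) (P : X -> Prop) (HP : submod P)
  (G : submodT HP -> W) : is_hom G -> hom_on P (extend G).
Proof.
move=> hG a x y Px Py.
have -> : a *: x + y = incl (a *: (exist _ x Px : submodT HP) + exist _ y Py) by [].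
by rewrite !extendE hG -(extendE G (exist _ x Px)) -(extendE G (exist _ y Py)).
Qed.

(* Computing [N . P] inside [X] or inside the module [P] gives the same
   result, since every homomorphism on [P] extends to [X]. *)
Lemma dotp_restrict (P : X -> Prop) (HP : submod P) (u : submodT HP) :
  dotp N P (incl u) -> dotp N (@fullp R _) u.
Proof.
move=> [_ Hu]; split => // W G /hom_full hG aN.
by rewrite -extendE; apply: Hu => //; apply: extend_hom.
Qed.

End Product.

Definition tr (R : pzRingType) (M V : lmodType R) (N : M -> Prop) : V -> Prop :=
  fun v => forall T : V -> Prop, submod T ->
    (forall f : M -> V, is_hom f -> forall n, N n -> T (f n)) -> T v.

Lemma tr_submod (R : pzRingType) (M V : lmodType R) (N : M -> Prop) :
  submod (@tr R M V N).
Proof.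
split; first by move=> T HT _; apply: sm0.
by move=> a x y Tx Ty T HT H; apply: smL => //; [apply: Tx|apply: Ty].
Qed.

(* For [M] projective in sigma[M] and [V] in sigma[M], [N . V] lies in the
   trace of [N]: every [h : M -> V / tr N] lifts to [M -> V], so [V / tr N]
   is annihilated by [N]. *)
Lemma dotp_full_sub_tr (R : pzRingType) (M V : lmodType R) (N : M -> Prop) :
  projective_in_sigma M -> in_sigma M V ->
  forall v, dotp N (@fullp R V) v -> tr N v.
Proof.
move=> proj HV v [_ Hv].
pose HT := @tr_submod R M V N.
apply/(qproj0 HT); apply: Hv; first exact/hom_full/qproj_hom.
move=> h hh m Nm.
have qsurj b : exists a, qproj HT a = b by have [a ->] := qproj_surj b; exists a.
have [f [hf E]] := proj V (quotT HT) HV (in_sigma_quot HV HT) (qproj HT) (qproj_hom HT)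
  qsurj h hh.
by rewrite -E; apply/qproj0 => T HTT H; apply: H.
Qed.

Definition homT (R : pzRingType) (M X : lmodType R) := {f : M -> X | is_hom f}.
HB.instance Definition _ R M X := gen_eqMixin (@homT R M X).
HB.instance Definition _ R M X := gen_choiceMixin (@homT R M X).

Definition fin_supp (R : pzRingType) (M X : lmodType R) (phi : homT M X -> M) : Prop :=
  exists s : seq (homT M X), forall f, f \notin s -> phi f = 0.

Lemma fin_supp_submod (R : pzRingType) (M X : lmodType R) : submod (@fin_supp R M X).
Proof.
split; first by exists [::].
move=> a x y [s Hs] [t Ht]; exists (s ++ t) => f.
rewrite mem_cat negb_or => /andP[fs ft].
by rewrite -[(a *: x + y) f]/(a *: x f + y f) Hs // Ht // scaler0 addr0.
Qed.

(* The direct sum of copies of [M] indexed by [Hom(M, X)]; it is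
   M-generated, and maps onto the trace of [M] in [X] by summation. *)
Notation Msum M X := (submodT (@fin_supp_submod _ M X)).

Section DirectSum.
Variables (R : pzRingType) (M X : lmodType R).

Definition sum_on (phi : homT M X -> M) (s : seq (homT M X)) : X :=
  \sum_(f <- s) proj1_sig f (phi f).

Lemma sum_on_indep (phi : homT M X -> M) s t :
  uniq s -> uniq t -> (forall f, f \notin s -> phi f = 0) ->
  (forall f, f \notin t -> phi f = 0) -> sum_on phi s = sum_on phi t.
Proof.
move=> us ut Hs Ht.
have restrict (u v : seq (homT M X)) : (forall f, f \notin v -> phi f = 0) ->
    sum_on phi u = \sum_(f <- filter (mem v) u) proj1_sig f (phi f).
  move=> Hv; rewrite big_filter /sum_on (bigID (mem v)) /= [X in _ + X]big1 ?addr0 //.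
  by move=> f /Hv ->; rewrite (hom0 (proj2_sig f)).
rewrite (restrict s t Ht) (restrict t s Hs); apply: perm_big; apply: uniq_perm.
- exact: filter_uniq.
- exact: filter_uniq.
- by move=> f; rewrite !mem_filter andbC.
Qed.

Definition supp (phi : Msum M X) : seq (homT M X) :=
  undup (proj1_sig (cid (inclP phi))).

Lemma supp_uniq (phi : Msum M X) : uniq (supp phi).
Proof. exact: undup_uniq. Qed.

Lemma supp_cov (phi : Msum M X) f : f \notin supp phi -> incl phi f = 0.
Proof. by rewrite /supp mem_undup; case: (cid _) => s Hs /= /Hs. Qed.

Definition msum (phi : Msum M X) : X := sum_on (incl phi) (supp phi).

Lemma msumE (phi : Msum M X) s :
  uniq s -> (forall f, f \notin s -> incl phi f = 0) -> msum phi = sum_on (incl phi) s.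
Proof. by move=> us Hs; apply: sum_on_indep => //; [apply: supp_uniq|apply: supp_cov]. Qed.

Lemma msum_hom : is_hom msum.
Proof.
move=> a x y.
pose s := undup (supp x ++ supp y ++ supp (a *: x + y)).
have us : uniq s by apply: undup_uniq.
have cov (z : Msum M X) : {subset supp z <= s} -> forall f, f \notin s -> incl z f = 0.
  by move=> sub f fs; apply: supp_cov; apply: contra fs; apply: sub.
have [cx cy cxy] : [/\ {subset supp x <= s}, {subset supp y <= s}
                     & {subset supp (a *: x + y) <= s}].
  by split=> f fz; rewrite /s mem_undup !mem_cat fz ?orbT.
rewrite (msumE us (cov _ cxy)) (msumE us (cov _ cx)) (msumE us (cov _ cy)).
rewrite /sum_on scaler_sumr -big_split /=; apply: eq_bigr => f _.
exact: (proj2_sig f).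
Qed.

Definition delta_fun (f0 : homT M X) (m : M) : homT M X -> M :=
  fun f => if f == f0 then m else 0.

Lemma delta_fin_supp (f0 : homT M X) (m : M) : fin_supp (delta_fun f0 m).
Proof. by exists [:: f0] => f; rewrite mem_seq1 /delta_fun => /negbTE ->. Qed.

Definition delta (f0 : homT M X) (m : M) : Msum M X :=
  exist _ (delta_fun f0 m) (delta_fin_supp f0 m).

Lemma delta_hom (f0 : homT M X) : is_hom (delta f0).
Proof.
move=> a x y; apply: incl_inj; apply: funext => f.
rewrite -[RHS]/(a *: delta_fun f0 x f + delta_fun f0 y f) /= /delta_fun.
by case: (f == f0); rewrite ?scaler0 ?addr0.
Qed.

Lemma msum_delta (f0 : homT M X) (m : M) : msum (delta f0 m) = proj1_sig f0 m.
Proof.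
rewrite (@msumE _ [:: f0]) //; last first.
  by move=> f; rewrite mem_seq1 /= /delta_fun => /negbTE ->.
by rewrite /sum_on big_cons big_nil addr0 /= /delta_fun eqxx.
Qed.

Lemma sum_if_eq (phi : homT M X -> M) (s : seq (homT M X)) f :
  uniq s -> \sum_(f' <- s) (if f == f' then phi f' else 0) = if f \in s then phi f else 0.
Proof.
elim: s => [|a s IH]; first by rewrite big_nil.
rewrite /= big_cons inE => /andP[nas us]; rewrite IH //.
case: (eqVneq f a) => [->|_] /=; last by rewrite add0r.
by rewrite (negbTE nas) addr0.
Qed.

(* Every family is the finite sum of the [delta f (phi f)], each of which is
   the image of [phi f] under the homomorphism [delta f : M -> Msum M X]. *)
Lemma Msum_generated : Mgenerated M (Msum M X).
Proof.
move=> T HT Hf phi.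
have -> : phi = \sum_(f <- supp phi) delta f (incl phi f).
  apply: incl_inj; rewrite (hom_sum (@incl_hom _ _ _ _)) fct_sumE.
  apply: funext => f /=; rewrite /delta_fun sum_if_eq ?supp_uniq //.
  by case: ifP => // /negbT /supp_cov ->.
by apply: sm_sum => // f; exact: Hf (delta_hom f) _.
Qed.

Lemma in_sigma_Msum : in_sigma M (Msum M X).
Proof. by exists (Msum M X), id; split => //; exact: Msum_generated. Qed.

End DirectSum.

(* A homomorphism [M -> M] with values in [N] maps [N] into [N^2 = N . N]:
   composing it with any [N -> W], [W] annihilated by [N], gives a
   homomorphism [M -> W], which kills [N]. *)
Lemma hom_into_sqp (R : pzRingType) (M : lmodType R) (N : M -> Prop) (e : M -> M) :
  is_hom e -> (forall m, N (e m)) -> forall n, N n -> sqp N (e n).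
Proof.
move=> he Ne n Nn; split => // W g hg aN.
by apply: (aN (fun m => g (e m))) => // a x y; rewrite he hg.
Qed.

Section SquareTrace.
Variables (R : pzRingType) (M X : lmodType R) (N : M -> Prop).
Hypotheses (HN : submod N) (proj : projective_in_sigma M) (HX : in_sigma M X).

Definition Ncoef (phi : Msum M X) : Prop := forall f, N (incl phi f).

Lemma Ncoef_submod : submod Ncoef.
Proof.
split=> [f|a x y Nx Ny f]; first exact: sm0.
by rewrite -[incl (a *: x + y) f]/(a *: incl x f + incl y f); apply: smL.
Qed.

Lemma tr_sub_msum : subp (tr N) (imgp (@msum R M X) Ncoef).
Proof.
move=> x; apply; first exact: imgp_submod (@msum_hom R M X) Ncoef_submod.
move=> f hf n Nn; exists (delta (exist _ f hf) n); split; last by rewrite msum_delta.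
by move=> f'; rewrite /= /delta_fun; case: ifP => _ //; apply: sm0.
Qed.

(* Every [k : M -> X] with values in the trace of [N] maps [N] into the
   kernel of every [g : X -> W] with [W] annihilated by [N^2]: lifting [k]
   along the summation map writes [k n] as a sum of [f (e_f n)], where each
   [e_f : M -> M] has values in [N], hence [e_f n] lies in [N^2]. *)
Lemma tr_hom_annih (k : M -> X) : is_hom k -> (forall m, tr N (k m)) ->
  forall (W : lmodType R) (g : X -> W), is_hom g -> annih (sqp N) W ->
  forall n, N n -> g (k n) = 0.
Proof.
move=> hk trk W g hg aW n Nn.
pose HI := imgp_submod (@msum_hom R M X) Ncoef_submod.
pose pi (phi : submodT Ncoef_submod) : submodT HI :=
  exist _ (msum (incl phi)) (ex_intro _ (incl phi) (conj (inclP phi) erefl)).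
have pi_hom : is_hom pi by move=> a x y; apply: incl_inj; rewrite /= msum_hom.
have pi_surj u : exists phi, pi phi = u.
  case: u => y [phi [Nphi Ey]]; exists (exist _ phi Nphi).
  by apply: incl_inj; rewrite /= Ey.
pose k' m : submodT HI := exist _ (k m) (tr_sub_msum (trk m)).
have k'_hom : is_hom k' by move=> a x y; apply: incl_inj; rewrite /= hk.
have [kt [hkt Ekt]] := proj (in_sigma_sub (@in_sigma_Msum R M X) Ncoef_submod)
  (in_sigma_sub HX HI) pi_hom pi_surj k'_hom.
have -> : k n = msum (incl (kt n)) by rewrite -[k n]/(incl (k' n)) -Ekt.
rewrite /msum /sum_on (hom_sum hg) big1 // => f _.
pose e m := incl (incl (kt m)) f.
have he : is_hom e by move=> a x y; rewrite /e hkt.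
apply: (aW _ (hom_comp (proj2_sig f) hg) (e n)).
by apply: hom_into_sqp => // m; apply: (inclP (kt m)).
Qed.

Lemma dotp_dotp_sub_sqp :
  subp (dotp N (dotp N (@fullp R X))) (dotp (sqp N) (@fullp R X)).
Proof.
move=> x Hx; split => // W g /hom_full hg aW.
pose HV := dotp_submod N (@fullp_submod R X).
pose u : submodT HV := exist _ x (dotp_sub Hx).
have du : dotp N (@fullp R _) u := @dotp_restrict _ _ _ _ _ _ u Hx.
have tru : tr N u := dotp_full_sub_tr proj (in_sigma_sub HX HV) du.
apply: (tru _ (ker_submod (hom_comp (@incl_hom _ _ _ HV) hg))) => k hk n Nn.
apply: (tr_hom_annih (hom_comp hk (@incl_hom _ _ _ HV))) => // m.
apply: (dotp_full_sub_tr proj HX); exact: inclP.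
Qed.

End SquareTrace.

Section Primes.
Variables (R : pzRingType) (M X : lmodType R).

(* Under projectivity every M-prime submodule satisfies the M-semiprime
   condition: from [N^2 . Z <= P] primality gives [Z <= P] or
   [N^2 . X <= P]; in the latter case [N . (N . X) <= N^2 . X <= P], and
   primality applied twice gives [N . X <= P]. *)
Lemma prime_semiprime (P : X -> Prop) :
  projective_in_sigma M -> in_sigma M X -> Mprime M P ->
  forall (N : M -> Prop) (Z : X -> Prop), submod N -> submod Z ->
  subp (dotp (sqp N) Z) P -> subp (dotp N Z) P.
Proof.
move=> proj HX [HP _ Hpr] N Z HN HZ sqNZ_P.
have [sqNX_P|ZP] := Hpr _ _ (dotp_submod N HN) HZ sqNZ_P; last first.
  by move=> x /dotp_sub /ZP.
have NNX_P : subp (dotp N (dotp N (@fullp R X))) P.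
  by move=> x /(dotp_dotp_sub_sqp HN proj HX) /sqNX_P.
have NX_P : subp (dotp N (@fullp R X)) P.
  by case: (Hpr _ _ HN (dotp_submod N (@fullp_submod R X)) NNX_P).
by move=> x /(@dotp_mono _ _ _ N Z (@fullp R X) (fun _ _ => I)) /NX_P.
Qed.

Lemma sump_submod (A B : X -> Prop) : submod A -> submod B -> submod (sump A B).
Proof.
move=> HA HB; split; first by exists 0, 0; split; rewrite ?addr0 //; apply: sm0.
move=> a _ _ [y1 [z1 [Ay1 Bz1 ->]]] [y2 [z2 [Ay2 Bz2 ->]]].
exists (a *: y1 + y2), (a *: z1 + z2); split; try exact: smL.
by rewrite scalerDr addrACA.
Qed.

Lemma sumpl (A B : X -> Prop) y : submod B -> A y -> sump A B y.
Proof. by move=> HB Ay; exists y, 0; split; rewrite ?addr0 //; apply: sm0. Qed.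

Lemma sumpr (A B : X -> Prop) z : submod A -> B z -> sump A B z.
Proof. by move=> HA Bz; exists 0, z; split; rewrite ?add0r //; apply: sm0. Qed.

Lemma sump_sub (A B C : X -> Prop) :
  submod C -> subp A C -> subp B C -> subp (sump A B) C.
Proof. by move=> HC AsubC BsubC _ [y [z [Ay Bz ->]]]; apply: smD => //; [apply: AsubC|apply: BsubC]. Qed.

Lemma compl_prime_msys (P : X -> Prop) : Mprime M P -> m_system M (fun x => ~ P x).
Proof.
move=> [HP [x Px] Hpr]; split; first by exists x.
  by move=> y Py E; apply: Py; rewrite E; apply: sm0.
move=> N Y Z HN HY HZ [w [YZw Pw]] [v [YNXv Pv]].
apply/not_notP => avoid.
have YNZ_P : subp (sump Y (dotp N Z)) P by move=> u Hu; apply/not_notP => Pu; apply: avoid; exists u.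
have YP : subp Y P by move=> y Yy; apply: YNZ_P; apply: sumpl => //; apply: dotp_submod.
have NZP : subp (dotp N Z) P by move=> z Hz; apply: YNZ_P; apply: sumpr.
case: (Hpr _ _ HN HZ NZP) => [NXP|ZP].
- by apply: Pv; apply: (sump_sub HP YP NXP).
- by apply: Pw; apply: (sump_sub HP YP ZP).
Qed.

Lemma chain_union_submod (I : Type) (D : I -> Prop) (F : I -> X -> Prop) :
  (exists i, D i) -> (forall i, D i -> submod (F i)) ->
  (forall i j, D i -> D j -> subp (F i) (F j) \/ subp (F j) (F i)) ->
  submod (fun x => exists2 i, D i & F i x).
Proof.
move=> [i0 Di0] HF Fchain; split; first by exists i0 => //; apply: sm0 (HF _ Di0).
move=> a x y [i Di Fix] [j Dj Fjy].
case: (Fchain i j Di Dj) => [ij|ji].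
- by exists j => //; apply: (smL (HF _ Dj)) => //; apply: ij.
- by exists i => //; apply: (smL (HF _ Di)) => //; apply: ji.
Qed.

Lemma maximal_avoiding (S Y : X -> Prop) : submod Y -> ~ meets S Y ->
  exists A, [/\ submod A, subp Y A, (forall x, S x -> ~ A x) &
    forall B, submod B -> subp A B -> (forall x, S x -> ~ B x) -> subp B A].
Proof.
move=> HY SY.
pose good A := [/\ submod A, subp Y A & forall x, S x -> ~ A x].
have goodY : good Y by split => // x Sx Yx; apply: SY; exists x.
pose T := {A : X -> Prop | good A}.
pose le (a b : T) := `[< subp (proj1_sig a) (proj1_sig b) >].
have [|||[A [HA YA SA]] Amax] := @ZL_preorder T (exist _ Y goodY) le.
- by move=> a; apply/asboolP.
- by move=> a b c /asboolP ab /asboolP bc; apply/asboolP => x /ab /bc.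
- move=> Ch Chtot; case: (lem (exists a, Ch a)) => [nonempty|empty]; last first.
    by exists (exist _ Y goodY) => a Cha; case: empty; exists a.
  pose U x := exists2 a, Ch a & proj1_sig a x.
  have goodU : good U.
    split.
    + apply: chain_union_submod => // [a _|a b Cha Chb]; first by case: (proj2_sig a).
      by case: (Chtot a b Cha Chb) => /asboolP; [left|right].
    + case: nonempty => a Cha y Yy; exists a => //.
      by case: (proj2_sig a) => _ Ya _; apply: Ya.
    + by move=> x Sx [a _ ax]; case: (proj2_sig a) => _ _ Sa; apply: (Sa x Sx ax).
  by exists (exist _ U goodU) => a Cha; apply/asboolP => x ax; exists a.
exists A; split => // B HB AB SB x Bx.
have goodB : good B by split => // y /YA /AB.
by have /asboolP := Amax (exist _ B goodB) (asboolT AB); apply.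
Qed.

Lemma maximal_avoiding_prime (S A : X -> Prop) :
  m_system M S -> submod A -> (forall x, S x -> ~ A x) ->
  (forall B, submod B -> subp A B -> (forall x, S x -> ~ B x) -> subp B A) ->
  Mprime M A.
Proof.
move=> [[s Ss] _ Sms] HA SA Amax; split => //; first by exists s; apply: SA.
move=> N Z HN HZ NZ_A; apply/not_notP => notsub.
have HNX := dotp_submod N (@fullp_submod R X).
have meets_sum (B : X -> Prop) : submod B -> ~ subp B A -> meets (sump A B) S.
  move=> HB BA; apply/not_notP => avoid; apply: BA => z Bz.
  apply: (Amax (sump A B)); first exact: sump_submod.
  - by move=> y Ay; apply: sumpl.
  - by move=> x Sx ABx; apply: avoid; exists x.
  - exact: sumpr.
have [w [AZw Sw]] := Sms N A Z HN HA HZ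
  (meets_sum Z HZ (fun ZA => notsub (or_intror ZA)))
  (meets_sum _ HNX (fun NXA => notsub (or_introl NXA))).
by apply: (SA w Sw); apply: (sump_sub HA (fun _ h => h) NZ_A).
Qed.

(* When some M-prime contains [Y], the M-radical of [Y] is the intersection
   of all M-primes containing [Y]: a point outside a prime [P] lies in the
   m-system [X \ P], and a point in an m-system [S] missing [Y] lies outside a
   prime maximal among the submodules containing [Y] and avoiding [S]. *)
Lemma Mrad_cap_primes (Y : X -> Prop) : submod Y ->
  (exists P, Mprime M P /\ subp Y P) ->
  Mrad M Y = (fun x => forall P, Mprime M P /\ subp Y P -> P x).
Proof.
move=> HY primeY; apply: funext => x; apply: propext; split.
- case=> [noprime|msys]; first by case: (noprime primeY).
  move=> P [HP YP]; apply/not_notP => Px.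
  by have [y [Py Yy]] := msys _ (compl_prime_msys HP) Px; apply: Py; apply: YP.
- move=> capx; right => S HS Sx; apply/not_notP => SY.
  have [A [HA YA SA Amax]] := maximal_avoiding HY SY.
  exact: SA x Sx (capx A (conj (maximal_avoiding_prime HS HA SA Amax) YA)).
Qed.

Lemma cap_primes_semiprime (F : (X -> Prop) -> Prop) :
  projective_in_sigma M -> in_sigma M X ->
  (forall P, F P -> Mprime M P) -> (exists P, F P) ->
  Msemiprime M (fun x => forall P, F P -> P x).
Proof.
move=> proj HX Fprime [P0 FP0]; split.
- split=> [P /Fprime [HP _ _]|a x y Fx Fy P FP]; first exact: sm0 HP.
  by case: (Fprime P FP) => HP _ _; apply: (smL HP); [apply: Fx|apply: Fy].
- by case: (Fprime P0 FP0) => _ [x P0x] _; exists x => /(_ P0 FP0).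
- move=> N Z HN HZ sqNZ x NZx P FP.
  apply: (prime_semiprime proj HX (Fprime P FP) HN HZ _ NZx) => y /sqNZ.
  exact.
Qed.

End Primes.

Theorem corollary2p26 (R : pzRingType) (M X : lmodType R) :
  projective_in_sigma M -> in_sigma M X ->
  forall Y : X -> Prop, submod Y ->
    (forall x, Mrad M Y x) \/ Msemiprime M (Mrad M Y).
Proof.
move=> proj HX Y HY.
have [primeY|noprime] := lem (exists P, Mprime M P /\ subp Y P); last first.
  by left => x; left.
right; rewrite (Mrad_cap_primes HY primeY).
by apply: cap_primes_semiprime => // P [].
Qed.
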